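(* Let $(X(n),V(n))_{n\ge0}$ be a global solution of the discrete Motsch–Tadmor model (as in the context, under its standing assumptions). Then for all $n\ge0$, \[ \|\Delta^x(n+1)\|_F\le\|\Delta^x(n)\|_F+h\|\Delta^v(n)\|_F,\qquad \|\Delta^v(n+1)\|_F\le\Big[1-h\kappa\big(1-\|\phi\|_{\mathrm{Lip}}N\|\Delta^x(n)\|_F\big)\Big]\|\Delta^v(n)\|_F . \]
   Context: Discrete MT model: fix $N\ge1$, $d\ge1$, $\kappa>0$, $h>0$, and $a:[0,\infty)\to\mathbb{R}$ with constants $0<c_1\le c_2$, $c_1\le a\le c_2$, and $|a(r_1)-a(r_2)|\le L_a|r_1-r_2|$ ($L_a>0$); also $0<h<\min\{1,1/\kappa\}$. A solution satisfies $x_i(n+1)=x_i(n)+hv_i(n)$, $v_i(n+1)=v_i(n)+h\kappa\sum_{j=1}^N\phi_{ij}(n)(v_j(n)-v_i(n))$, $\phi_{ij}(n)=\frac{a(\|x_i(n)-x_j(n)\|)}{\sum_{k}a(\|x_i(n)-x_k(n)\|)}$, with $x_i(n),v_i(n)\in\mathbb{R}^d$. Notation: $\|\Delta^x(n)\|_F=(\sum_{i,j}\|x_i(n)-x_j(n)\|^2)^{1/2}$, $\|\Delta^v(n)\|_F=(\sum_{i,j}\|v_i(n)-v_j(n)\|^2)^{1/2}$, $\|\phi\|_{\mathrm{Lip}}=\frac{L_a}{Nc_1}(1+\frac{c_2}{c_1})$. *)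

From mathcomp Require Import all_boot all_order all_algebra.
From mathcomp Require Import reals.
Set Implicit Arguments. Unset Strict Implicit. Unset Printing Implicit Defensive.
Import Order.TTheory GRing.Theory Num.Theory.
Local Open Scope ring_scope.

Definition enorm (R : realType) (d : nat) (u : 'rV[R]_d) : R :=
  Num.sqrt (\sum_(k < d) u ord0 k ^+ 2).

Definition mt_phi (R : realType) (N d : nat) (a : R -> R)
    (X : 'I_N -> 'rV[R]_d) (i j : 'I_N) : R :=
  a (enorm (X i - X j)) / \sum_(k < N) a (enorm (X i - X k)).

Definition is_MT_solution (R : realType) (N d : nat) (kappa h : R) (a : R -> R)
    (X V : nat -> 'I_N -> 'rV[R]_d) : Prop :=
  forall (n : nat) (i : 'I_N),
    X n.+1 i = X n i + h *: V n i /\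
    V n.+1 i = V n i + (h * kappa) *: \sum_(j < N) mt_phi a (X n) i j *: (V n j - V n i).

(* Frobenius norm of the relative-state matrix (||Delta^x||_F, ||Delta^v||_F) *)
Definition DeltaF (R : realType) (N d : nat) (Y : 'I_N -> 'rV[R]_d) : R :=
  Num.sqrt (\sum_(i < N) \sum_(j < N) enorm (Y i - Y j) ^+ 2).

Definition phi_Lip (R : realType) (N : nat) (La c1 c2 : R) : R :=
  La / (N%:R * c1) * (1 + c2 / c1).

From mathcomp Require Import all_boot all_order all_algebra.
From mathcomp Require Import reals ring lra.
Import Order.TTheory GRing.Theory Num.Theory.
Set Implicit Arguments.
Unset Strict Implicit.
Unset Printing Implicit Defensive.

Local Open Scope ring_scope.

(* Both estimates are pairwise estimates summed in the Frobenius norm by the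
   Minkowski inequality.
   For velocities, the weights phi_ij are row-stochastic, so with c = h kappa
     v_i' - v_k' = (1 - c) (v_i - v_k) + c sum_j (phi_ij - phi_kj) (v_j - v_i);
   the weights are ||phi||_Lip-Lipschitz in the position of the agent and each
   |v_j - v_i| is at most ||Delta^v||_F, so the last sum is at most
   ||phi||_Lip N |x_i - x_k| ||Delta^v||_F. *)

Section L2norm.
Variables (R : rcfType) (T : finType).
Implicit Types f g : T -> R.

Definition l2norm f := Num.sqrt (\sum_t f t ^+ 2).

Lemma eq_l2norm f g : f =1 g -> l2norm f = l2norm g.
Proof. by move=> eq_fg; rewrite /l2norm; under eq_bigr do rewrite eq_fg. Qed.

Lemma sum_sqr_ge0 f : 0 <= \sum_t f t ^+ 2.
Proof. by apply: sumr_ge0 => t _; rewrite sqr_ge0. Qed.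

Lemma l2norm_ge0 f : 0 <= l2norm f.
Proof. exact: sqrtr_ge0. Qed.

Lemma l2normK f : l2norm f ^+ 2 = \sum_t f t ^+ 2.
Proof. by rewrite sqr_sqrtr // sum_sqr_ge0. Qed.

Lemma lagrange_identity f g :
  \sum_i \sum_j (f i * g j - f j * g i) ^+ 2 =
  2 * ((\sum_i f i ^+ 2) * (\sum_j g j ^+ 2) - (\sum_i f i * g i) ^+ 2).
Proof.
have sum_prod u v : \sum_i \sum_j u i * v j = (\sum_i u i) * (\sum_j v j :> R).
  by rewrite mulr_suml; apply: eq_bigr => i _; rewrite mulr_sumr.
transitivity (\sum_i \sum_j (f i ^+ 2 * g j ^+ 2) + \sum_i \sum_j (g i ^+ 2 * f j ^+ 2)
   - 2 * \sum_i \sum_j ((f i * g i) * (f j * g j))).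
  rewrite mulr_sumr -big_split -sumrB /=; apply: eq_bigr => i _.
  by rewrite mulr_sumr -big_split -sumrB; apply: eq_bigr => j _ /=; ring.
by rewrite !sum_prod expr2; ring.
Qed.

Lemma cauchy_schwarz f g : \sum_t f t * g t <= l2norm f * l2norm g.
Proof.
rewrite -sqrtrM ?sum_sqr_ge0 //; apply: (le_trans (ler_norm _)).
rewrite -sqrtr_sqr ler_sqrt ?mulr_ge0 ?sum_sqr_ge0 //.
have : 0 <= \sum_i \sum_j (f i * g j - f j * g i) ^+ 2.
  by apply: sumr_ge0 => i _; apply: sum_sqr_ge0.
by rewrite lagrange_identity pmulr_rge0 // subr_ge0.
Qed.

Lemma ler_l2normD f g : l2norm (fun t => f t + g t) <= l2norm f + l2norm g.
Proof.
rewrite -(ger0_norm (addr_ge0 (l2norm_ge0 f) (l2norm_ge0 g))) -sqrtr_sqr.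
rewrite ler_sqrt ?sqr_ge0 // sqrrD !l2normK.
have -> : \sum_t (f t + g t) ^+ 2
    = \sum_t f t ^+ 2 + 2 * \sum_t f t * g t + \sum_t g t ^+ 2.
  by rewrite mulr_sumr -!big_split /=; apply: eq_bigr => t _; ring.
by rewrite lerD2r lerD2l; have := cauchy_schwarz f g; lra.
Qed.

Lemma l2normZ c f : l2norm (fun t => c * f t) = `|c| * l2norm f.
Proof.
rewrite /l2norm -sqrtr_sqr -sqrtrM ?sqr_ge0 // mulr_sumr.
by under eq_bigr do rewrite exprMn.
Qed.

Lemma ler_l2norm f g : (forall t, `|f t| <= g t) -> l2norm f <= l2norm g.
Proof.
move=> le_fg; rewrite ler_sqrt ?sum_sqr_ge0 //; apply: ler_sum => t _.
by rewrite -real_normK ?num_real // lerXn2r ?nnegrE ?(le_trans _ (le_fg t)).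
Qed.

Lemma ler_l2norm_term f t : `|f t| <= l2norm f.
Proof.
rewrite -sqrtr_sqr ler_sqrt ?sum_sqr_ge0 //.
by rewrite (bigD1 t) //= lerDl sumr_ge0 // => s _; rewrite sqr_ge0.
Qed.

End L2norm.

Section Enorm.
Variables (R : realType) (d : nat).
Implicit Types u v : 'rV[R]_d.

Lemma enormE u : enorm u = l2norm (fun k => u ord0 k).
Proof. by []. Qed.

Lemma enorm_ge0 u : 0 <= enorm u.
Proof. exact: sqrtr_ge0. Qed.

Lemma enormD u v : enorm (u + v) <= enorm u + enorm v.
Proof.
rewrite !enormE (@eq_l2norm _ _ _ (fun k => u ord0 k + v ord0 k)).
  exact: ler_l2normD.
by move=> k; rewrite mxE.
Qed.

Lemma enormZ (c : R) u : enorm (c *: u) = `|c| * enorm u.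
Proof. by rewrite !enormE -l2normZ; apply: eq_l2norm => k; rewrite mxE. Qed.

Lemma enorm0 : enorm (0 : 'rV[R]_d) = 0.
Proof. by rewrite -(scale0r 0) enormZ normr0 mul0r. Qed.

Lemma enormB u v : enorm (u - v) = enorm (v - u).
Proof. by rewrite -opprB -scaleN1r enormZ normrN1 mul1r. Qed.

Lemma ler_enorm_sum (I : finType) (F : I -> 'rV[R]_d) :
  enorm (\sum_i F i) <= \sum_i enorm (F i).
Proof.
elim/big_ind2: _ => [|x1 y1 x2 y2 le1 le2|//]; first by rewrite enorm0.
exact: le_trans (enormD _ _) (lerD le1 le2).
Qed.

Lemma ler_enorm_dist u v : `|enorm u - enorm v| <= enorm (u - v).
Proof.
have := enormD (v - u) u; have := enormD (u - v) v.
rewrite !subrK enormB => le_u le_v.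
by apply/ler_normlP; split; lra.
Qed.

End Enorm.

Section DeltaF.
Variables (R : realType) (N d : nat).
Implicit Types Y Z W : 'I_N -> 'rV[R]_d.

Lemma DeltaF_l2norm Y :
  DeltaF Y = l2norm (fun p : 'I_N * 'I_N => enorm (Y p.1 - Y p.2)).
Proof. by rewrite /DeltaF /l2norm pair_big. Qed.

Lemma DeltaF_ge0 Y : 0 <= DeltaF Y.
Proof. exact: sqrtr_ge0. Qed.

Lemma ler_enorm_DeltaF Y i j : enorm (Y i - Y j) <= DeltaF Y.
Proof.
rewrite DeltaF_l2norm -[X in X <= _]ger0_norm ?enorm_ge0 //.
exact: (ler_l2norm_term _ (i, j)).
Qed.

Lemma ler_DeltaF_comb Y Z W (alpha beta : R) : 0 <= alpha -> 0 <= beta ->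
  (forall i j, enorm (Y i - Y j) <= alpha * enorm (Z i - Z j) + beta * enorm (W i - W j)) ->
  DeltaF Y <= alpha * DeltaF Z + beta * DeltaF W.
Proof.
move=> alpha_ge0 beta_ge0 le_YZW; rewrite !DeltaF_l2norm.
rewrite -(ger0_norm alpha_ge0) -(ger0_norm beta_ge0) -!l2normZ.
apply: le_trans (ler_l2normD _ _); apply: ler_l2norm => -[i j] /=.
by rewrite ger0_norm ?enorm_ge0 // !ger0_norm.
Qed.

End DeltaF.

Section Weights.
Variables (R : realType) (N d : nat) (a : R -> R) (c1 c2 La : R).
Hypotheses (N_gt0 : (0 < N)%N) (c1_gt0 : 0 < c1) (La_ge0 : 0 <= La).
Hypothesis a_bounds : forall r, 0 <= r -> c1 <= a r /\ a r <= c2.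
Hypothesis a_lip : forall r1 r2, 0 <= r1 -> 0 <= r2 -> `|a r1 - a r2| <= La * `|r1 - r2|.
Implicit Types X : 'I_N -> 'rV[R]_d.

Definition mt_weight_sum X i := \sum_(k < N) a (enorm (X i - X k)).

Lemma Nc1_gt0 : 0 < N%:R * c1.
Proof. by rewrite mulr_gt0 // ltr0n. Qed.

Lemma mt_weight_sum_ge X i : N%:R * c1 <= mt_weight_sum X i.
Proof.
rewrite mulr_natl -[N in c1 *+ N]card_ord -sumr_const.
by apply: ler_sum => k _; case: (a_bounds (enorm_ge0 (X i - X k))).
Qed.

Lemma mt_weight_sum_gt0 X i : 0 < mt_weight_sum X i.
Proof. exact: lt_le_trans Nc1_gt0 (mt_weight_sum_ge X i). Qed.

Lemma a_enorm_lipschitz X i k m :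
  `|a (enorm (X i - X m)) - a (enorm (X k - X m))| <= La * enorm (X i - X k).
Proof.
apply: le_trans (a_lip (enorm_ge0 _) (enorm_ge0 _)) _.
by rewrite ler_wpM2l // (le_trans (ler_enorm_dist _ _)) // opprB addrA subrK.
Qed.

Lemma mt_weight_sum_lipschitz X i k :
  `|mt_weight_sum X i - mt_weight_sum X k| <= N%:R * La * enorm (X i - X k).
Proof.
rewrite -sumrB (le_trans (ler_norm_sum _ _ _)) //.
rewrite -mulrA mulr_natl -[N in _ *+ N]card_ord -sumr_const.
by apply: ler_sum => m _; apply: a_enorm_lipschitz.
Qed.

Lemma mt_phi_sum1 X i : \sum_j mt_phi a X i j = 1.
Proof. by rewrite -mulr_suml divff // lt0r_neq0 // mt_weight_sum_gt0. Qed.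

Lemma mt_phi_lipschitz X i k j :
  `|mt_phi a X i j - mt_phi a X k j| <= phi_Lip N La c1 c2 * enorm (X i - X k).
Proof.
rewrite /mt_phi -/(mt_weight_sum X i) -/(mt_weight_sum X k).
set A := a _; set B := a _; set S := mt_weight_sum X i; set T := mt_weight_sum X k.
set del := enorm (X i - X k).
have S_gt0 : 0 < S := mt_weight_sum_gt0 X i.
have T_gt0 : 0 < T := mt_weight_sum_gt0 X k.
have [c1_le_B B_le_c2] := a_bounds (enorm_ge0 (X k - X j)).
have B_ge0 : 0 <= B := le_trans (ltW c1_gt0) c1_le_B.
have -> : A / S - B / T = (A - B) / S + B * (T - S) / (S * T).
  by field; rewrite !lt0r_neq0.
have le_AB : `|(A - B) / S| <= La * del / (N%:R * c1).
  rewrite normrM normfV (gtr0_norm S_gt0) ler_pdivrMr // mulrAC.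
  rewrite ler_pdivlMr ?Nc1_gt0 // ler_pM ?(ltW Nc1_gt0) ?mt_weight_sum_ge //.
  exact: a_enorm_lipschitz.
have le_BTS : `|B * (T - S) / (S * T)|
    <= c2 * (N%:R * La * del) / (N%:R * c1 * (N%:R * c1)).
  rewrite normrM normfV normrM (ger0_norm B_ge0) (gtr0_norm (mulr_gt0 S_gt0 T_gt0)).
  have NNc1_gt0 := mulr_gt0 Nc1_gt0 Nc1_gt0.
  rewrite ler_pdivrMr ?mulr_gt0 // mulrAC ler_pdivlMr //.
  have le_TS : `|T - S| <= N%:R * La * del by rewrite distrC mt_weight_sum_lipschitz.
  have le_ST : N%:R * c1 * (N%:R * c1) <= S * T.
    by apply: ler_pM; rewrite ?(ltW Nc1_gt0) ?mt_weight_sum_ge.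
  have le_num := ler_pM B_ge0 (normr_ge0 _) B_le_c2 le_TS.
  exact: ler_pM (mulr_ge0 B_ge0 (normr_ge0 _)) (ltW NNc1_gt0) le_num le_ST.
have -> : phi_Lip N La c1 c2 * del
    = La * del / (N%:R * c1) + c2 * (N%:R * La * del) / (N%:R * c1 * (N%:R * c1)).
  by rewrite /phi_Lip; field; rewrite lt0r_neq0 // pnatr_eq0 -lt0n N_gt0.
exact: le_trans (ler_normD _ _) (lerD le_AB le_BTS).
Qed.

End Weights.

Lemma phi_Lip_ge0 (R : realType) (N : nat) (La c1 c2 : R) :
  0 <= La -> 0 < c1 -> 0 <= c2 -> 0 <= phi_Lip N La c1 c2.
Proof.
move=> La_ge0 c1_gt0 c2_ge0.
by rewrite /phi_Lip mulr_ge0 ?addr_ge0 ?divr_ge0 ?mulr_ge0 ?ler0n ?(ltW c1_gt0).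
Qed.

Lemma consensus_step_sub (R : pzRingType) (V : lmodType R) (N : nat)
    (w : 'I_N -> 'I_N -> R) (v : 'I_N -> V) (c : R) (i k : 'I_N) :
  \sum_j w k j = 1 ->
  (v i + c *: \sum_j w i j *: (v j - v i)) - (v k + c *: \sum_j w k j *: (v j - v k))
  = (1 - c) *: (v i - v k) + c *: \sum_j (w i j - w k j) *: (v j - v i).
Proof.
move=> wk1.
have step_identity (x y A B : V) :
    x + c *: A - (y + c *: (B + (x - y))) = (1 - c) *: (x - y) + c *: (A - B).
  rewrite opprD addrACA -scalerBr opprD addrA [c *: (_ - (x - y))]scalerBr.
  by rewrite [LHS]addrA scalerBl scale1r addrAC.
have -> : \sum_j w k j *: (v j - v k) = \sum_j w k j *: (v j - v i) + (v i - v k).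
  under eq_bigr => j _ do rewrite -(subrKA (v i)) scalerDr.
  by rewrite big_split /= -scaler_suml wk1 scale1r.
under [X in _ = _ + c *: X]eq_bigr => j _ do rewrite scalerBl.
by rewrite sumrB step_identity.
Qed.

Lemma ler_enorm_consensus_step_sub (R : realType) (N d : nat)
    (w : 'I_N -> 'I_N -> R) (v : 'I_N -> 'rV[R]_d) (c : R) (i k : 'I_N) :
  0 <= c <= 1 -> \sum_j w k j = 1 ->
  enorm ((v i + c *: \sum_j w i j *: (v j - v i))
         - (v k + c *: \sum_j w k j *: (v j - v k)))
  <= (1 - c) * enorm (v i - v k) + c * \sum_j `|w i j - w k j| * enorm (v j - v i).
Proof.
move=> /andP[c_ge0 c_le1] wk1; rewrite consensus_step_sub //.
apply: le_trans (enormD _ _) _; rewrite !enormZ !ger0_norm ?subr_ge0 //.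
rewrite lerD2l ler_wpM2l // (le_trans (ler_enorm_sum _)) //.
by apply: ler_sum => j _; rewrite enormZ.
Qed.

Section MTStep.
Variables (R : realType) (N d : nat) (kappa h c1 c2 La : R) (a : R -> R).
Variables (X V : nat -> 'I_N -> 'rV[R]_d).
Hypotheses (N_gt0 : (0 < N)%N) (c1_gt0 : 0 < c1) (La_ge0 : 0 <= La).
Hypothesis a_bounds : forall r, 0 <= r -> c1 <= a r /\ a r <= c2.
Hypothesis a_lip : forall r1 r2, 0 <= r1 -> 0 <= r2 -> `|a r1 - a r2| <= La * `|r1 - r2|.
Hypothesis sol : is_MT_solution kappa h a X V.

Lemma mt_position_step n i j :
  enorm (X n.+1 i - X n.+1 j) <= enorm (X n i - X n j) + `|h| * enorm (V n i - V n j).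
Proof.
rewrite (proj1 (sol n i)) (proj1 (sol n j)) opprD addrACA -scalerBr.
by rewrite -enormZ enormD.
Qed.

Lemma mt_velocity_step n i k : 0 <= h * kappa <= 1 ->
  enorm (V n.+1 i - V n.+1 k) <= (1 - h * kappa) * enorm (V n i - V n k)
    + h * kappa * (phi_Lip N La c1 c2 * N%:R * DeltaF (V n)) * enorm (X n i - X n k).
Proof.
move=> c_range; have /andP[c_ge0 _] := c_range.
rewrite (proj2 (sol n i)) (proj2 (sol n k)).
apply: le_trans (ler_enorm_consensus_step_sub _ _ c_range
  (mt_phi_sum1 N_gt0 c1_gt0 a_bounds _ _)) _.
rewrite -[h * kappa * _ * _]mulrA lerD2l ler_wpM2l //.
have -> : phi_Lip N La c1 c2 * N%:R * DeltaF (V n) * enorm (X n i - X n k)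
    = \sum_(j < N) phi_Lip N La c1 c2 * enorm (X n i - X n k) * DeltaF (V n).
  by rewrite sumr_const card_ord -mulr_natr; ring.
apply: ler_sum => j _; apply: ler_pM; rewrite ?normr_ge0 ?enorm_ge0 //.
  exact: mt_phi_lipschitz.
exact: ler_enorm_DeltaF.
Qed.

End MTStep.

Theorem proposition3p3 (R : realType) (N d : nat) (kappa h c1 c2 La : R)
    (a : R -> R) (X V : nat -> 'I_N -> 'rV[R]_d) :
  (1 <= N)%N -> (1 <= d)%N -> 0 < kappa -> 0 < h ->
  0 < c1 -> c1 <= c2 ->
  (forall r, 0 <= r -> c1 <= a r /\ a r <= c2) ->
  0 < La ->
  (forall r1 r2, 0 <= r1 -> 0 <= r2 -> `|a r1 - a r2| <= La * `|r1 - r2|) ->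
  h < 1 -> h < 1 / kappa ->
  is_MT_solution kappa h a X V ->
  forall n : nat,
    DeltaF (X n.+1) <= DeltaF (X n) + h * DeltaF (V n) /\
    DeltaF (V n.+1) <=
      (1 - h * kappa * (1 - phi_Lip N La c1 c2 * N%:R * DeltaF (X n))) * DeltaF (V n).
Proof.
move=> N_gt0 _ kappa_gt0 h_gt0 c1_gt0 c1_le_c2 a_bounds La_gt0 a_lip _ h_lt sol n.
have hk_lt1 : h * kappa < 1 by rewrite -ltr_pdivlMr.
have c_range : 0 <= h * kappa <= 1 by rewrite mulr_ge0 ?ltW.
have /andP[c_ge0 c_le1] := c_range.
have L_ge0 := phi_Lip_ge0 N (ltW La_gt0) c1_gt0 (le_trans (ltW c1_gt0) c1_le_c2).
split.
  rewrite -[DeltaF (X n)]mul1r.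
  apply: ler_DeltaF_comb => [||i j]; rewrite ?ler01 ?(ltW h_gt0) //.
  by rewrite mul1r -[h in h * _]gtr0_norm // (mt_position_step sol).
have -> : (1 - h * kappa * (1 - phi_Lip N La c1 c2 * N%:R * DeltaF (X n))) * DeltaF (V n)
    = (1 - h * kappa) * DeltaF (V n)
      + h * kappa * (phi_Lip N La c1 c2 * N%:R * DeltaF (V n)) * DeltaF (X n).
  by ring.
apply: ler_DeltaF_comb => [||i k].
- by rewrite subr_ge0.
- exact: mulr_ge0 c_ge0 (mulr_ge0 (mulr_ge0 L_ge0 (ler0n _ _)) (DeltaF_ge0 _)).
- exact: (mt_velocity_step N_gt0 c1_gt0 (ltW La_gt0) a_bounds a_lip sol _ _ _ c_range).
Qed.
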